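(* Let $K$ be a field and let $C=(c_{i,j})_{1\le i,j\le n}$ be a frieze matrix over $K$. Then for all $1\le i\le n-1$, $$c_{i,n}c_{1,i+1}-c_{i+1,n}c_{1,i} = c_{i,i+1}c_{1,n}.$$
   Context: A frieze matrix is a symmetric $n\times n$ matrix $C=(c_{i,j})$ over $K$ such that $c_{i,j}=0$ if and only if $i=j$, and satisfying the generalized diamond rule $c_{i,j}c_{i+1,j+1}-c_{i+1,j}c_{i,j+1}=c_{i,i+1}c_{j,j+1}$ for all indices with $n-1\ge j\ge i+1\ge 2$. *)

From mathcomp Require Import all_boot all_algebra.
Set Implicit Arguments. Unset Strict Implicit. Unset Printing Implicit Defensive.
Import GRing.Theory.
Local Open Scope ring_scope.

(* 1-indexed entry c_{i,j} of an n x n matrix, for 1 <= i,j <= n.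
   Out-of-range indices give 0 (never used in the statements below). *)
Definition fent (K : fieldType) (n : nat) (C : 'M[K]_n) (i j : nat) : K :=
  match insub i.-1, insub j.-1 with
  | Some i', Some j' => C i' j'
  | _, _ => 0
  end.

Definition frieze_matrix (K : fieldType) (n : nat) (C : 'M[K]_n) : Prop :=
  [/\ C^T = C,
      (forall i j : 'I_n, (C i j == 0) = (i == j)) &
      (forall i j : nat, (1 <= i)%N -> (i + 1 <= j)%N -> (j <= n - 1)%N ->
         fent C i j * fent C i.+1 j.+1 - fent C i.+1 j * fent C i j.+1
         = fent C i i.+1 * fent C j j.+1)].

From mathcomp Require Import all_boot all_algebra.
From mathcomp Require Import ring zify.
Import GRing.Theory.
Local Open Scope ring_scope.

(* By the diamond
   rule, and since the entries above the diagonal do not vanish, three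
   consecutive rows i, i+1, i+2 of the upper triangle satisfy the linear relation
     c_{i+1,i+2} X_i - c_{i,i+2} X_{i+1} + c_{i,i+1} X_{i+2} = 0,
   and so do three consecutive columns: the relation propagates from one column
   (resp. row) to the next because the 2x2 minors involved are given by the
   diamond rule.  Two vectors satisfying this relation have their consecutive
   2x2 minors in the ratio c_{i,i+1} : c_{i+1,i+2}; applied to the row segment
   (c_{1,i}, c_{1,i+1}, c_{1,i+2}) and the column segment
   (c_{i,n}, c_{i+1,n}, c_{i+2,n}), this carries the identity from i to i+1. *)

Section ThreeTermRelations.
Context {R : idomainType}.

Lemma three_term_transfer {a b c t p q r p' q' r' : R} : q != 0 ->
  p * q' - q * p' = c * t -> q * r' - r * q' = a * t ->
  a * p + c * r = b * q -> a * p' + c * r' = b * q'.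
Proof.
move=> q_neq0 minor12 minor23 rel; apply: (mulfI q_neq0).
have qp' : q * p' = p * q' - c * t by rewrite -minor12; ring.
have qr' : q * r' = a * t + r * q' by rewrite -minor23; ring.
transitivity (a * (q * p') + c * (q * r')); first ring.
rewrite qp' qr'; transitivity (q' * (a * p + c * r)); first ring.
by rewrite rel; ring.
Qed.

Lemma three_term_minors {a b c N s t u x y z : R} : c != 0 ->
  a * s + c * u = b * t -> a * x + c * z = b * y ->
  x * t - y * s = c * N -> y * u - z * t = a * N.
Proof.
move=> c_neq0 rel_stu rel_xyz minor12; apply: (mulfI c_neq0).
have cu : c * u = b * t - a * s by rewrite -rel_stu; ring.
have cz : c * z = b * y - a * x by rewrite -rel_xyz; ring.
transitivity (y * (c * u) - t * (c * z)); first ring.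
rewrite cu cz; transitivity (a * (x * t - y * s)); first ring.
by rewrite minor12; ring.
Qed.

End ThreeTermRelations.

Section DiamondRule.
Variables (R : idomainType) (n : nat) (c : nat -> nat -> R).
Hypothesis c_diag : forall i, (0 < i <= n)%N -> c i i = 0.
Hypothesis c_neq0 : forall i j, (0 < i)%N -> (i < j <= n)%N -> c i j != 0.
Hypothesis diamond : forall i j, (0 < i)%N -> (i < j < n)%N ->
  c i j * c i.+1 j.+1 - c i.+1 j * c i j.+1 = c i i.+1 * c j j.+1.

Lemma row_three_term i j : (0 < i)%N -> (i.+2 <= j <= n)%N ->
  c i.+1 i.+2 * c i j + c i i.+1 * c i.+2 j = c i i.+2 * c i.+1 j.
Proof.
move=> i_gt0 /andP[]; elim: j => // j IH.
rewrite leq_eqVlt ltnS => /predU1P[<- le_i2n | le_i2j lt_jn].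
  by rewrite c_diag; [ring | lia].
apply: (three_term_transfer (t := c j j.+1)) (IH le_i2j (ltnW lt_jn)).
- by apply: c_neq0; lia.
- by apply: diamond; lia.
- by apply: diamond; lia.
Qed.

Lemma col_three_term i k : (0 < k <= i)%N -> (i.+2 <= n)%N ->
  c i.+1 i.+2 * c k i + c i i.+1 * c k i.+2 = c i i.+2 * c k i.+1.
Proof.
move=> /andP[k_gt0 le_ki] le_i2n.
have [d def_i] : exists d, i = (d + k)%N by exists (i - k)%N; rewrite subnK.
elim: d k k_gt0 def_i {le_ki} => [|d IH] k k_gt0 def_i.
  by rewrite def_i add0n c_diag; [ring | lia].
have minor (j : nat) : (i <= j)%N -> (j < n)%N ->
    c k.+1 j * c k j.+1 - c k.+1 j.+1 * c k j = c j j.+1 * - c k k.+1.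
  move=> le_ij lt_jn; rewrite mulrN [c j _ * _]mulrC -diamond; [ring | lia..].
rewrite addSnnS in def_i.
apply: (three_term_transfer (t := - c k k.+1)) (IH k.+1 (ltn0Sn k) def_i).
- by apply: c_neq0; lia.
- by apply: minor; lia.
- by apply: minor; lia.
Qed.

Lemma ptolemy_first_last i : (0 < i < n)%N ->
  c i n * c 1 i.+1 - c i.+1 n * c 1 i = c i i.+1 * c 1 n.
Proof.
elim: i => // i IH /andP[_ lt_in].
have [->|i_gt0] := posnP i.
  by rewrite c_diag; [ring | lia].
apply: (three_term_minors (b := c i i.+2)) (IH _).
- by apply: c_neq0; lia.
- by apply: col_three_term; lia.
- by apply: row_three_term; lia.
- by rewrite i_gt0 ltnW.
Qed.

End DiamondRule.

Lemma frieze_fent_eq0 (K : fieldType) (n : nat) (C : 'M[K]_n) i j :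
  frieze_matrix C -> (0 < i <= n)%N -> (0 < j <= n)%N ->
  (fent C i j == 0) = (i == j).
Proof.
case=> _ C_eq0 _ /andP[i_gt0 le_in] /andP[j_gt0 le_jn].
have lt_i'n : (i.-1 < n)%N by lia.
have lt_j'n : (j.-1 < n)%N by lia.
rewrite /fent !insubT /= C_eq0 -val_eqE /=.
by apply/eqP/eqP => [|->]; lia.
Qed.

Theorem proposition4p5 (K : fieldType) (n : nat) (C : 'M[K]_n) :
  frieze_matrix C ->
  forall i : nat, (1 <= i)%N -> (i <= n - 1)%N ->
    fent C i n * fent C 1 i.+1 - fent C i.+1 n * fent C 1 i
    = fent C i i.+1 * fent C 1 n.
Proof.
move=> frC i i_gt0 le_in1; have [_ _ diamond] := frC.
apply: ptolemy_first_last; last by apply/andP; split; lia.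
- by move=> k k_bounds; apply/eqP; rewrite frieze_fent_eq0 ?eqxx.
- move=> k l k_gt0 /andP[lt_kl le_ln].
  by rewrite frieze_fent_eq0 //; lia.
- move=> k l k_gt0 /andP[lt_kl lt_ln].
  by apply: diamond; lia.
Qed.
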